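(* Let $X,Y\in\Sigma^*$, $k\ge0$ and $\ell\ge1$ integers, $\mathcal{S}(\ell)$ an $\ell$-cover, $\mathcal{F}$ the set of all strings occurring as a component of a pair in $\mathsf{Pairs}_\ell(X)\cup\mathsf{Pairs}_\ell(Y)$, and $(N(F))_{F\in\mathcal{F}}$ a $k$-complete family. For $S\in\{X,Y\}$ and a half-integer $0\le k'\le k$ define $$\mathsf{Pairs}^{(k,k')}_\ell(S)=\bigcup_{(U_1,U_2)\in\mathsf{Pairs}_\ell(S)}\{(U_1',U_2'): U_i'\in N_{d_i,d_i'}(U_i),\ d_1+d_2=k,\ d_1'+d_2'=k'\},$$ where $d_1,d_2$ range over nonnegative integers and $d_i'$ over half-integers with $0\le d_i'\le d_i$. If $\mathsf{LCF}_k(X,Y)\ge\ell$, then $$\mathsf{LCF}_k(X,Y)=\max_{k_1+k_2=k}\mathrm{maxPairLCP}(\mathsf{Pairs}^{(k,k_1)}_\ell(X),\mathsf{Pairs}^{(k,k_2)}_\ell(Y)),$$ where $k_1,k_2$ range over half-integers in $[0,k]$.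
   Context: $U[i..j]$ is a factor, $U^R$ the reversal, $d_H$ the Hamming distance, $\mathsf{LCP}$ the longest common prefix length, $\mathsf{LCP}_d(U,V)=\max\{p\le\min(|U|,|V|): d_H(U[1..p],V[1..p])\le d\}$, $\#_\$(W)$ the number of $\$$'s in $W$, and half-integers are elements of $\tfrac12\mathbb{Z}$. $\mathsf{LCF}_k(X,Y)$ is the maximum length of a factor of $X$ and a factor of $Y$ of equal length at Hamming distance at most $k$. A $d$-cover is a set $\mathcal{S}(d)\subseteq\mathbb{Z}_+$ with a function $h$, $0\le h(i,j)<d$, such that $i+h(i,j),j+h(i,j)\in\mathcal{S}(d)$ for all $i,j\in\mathbb{Z}_+$; $\mathsf{Pairs}_\ell(U)=\{((U[1..i-1])^R,U[i..|U|]): i\in\mathcal{S}(\ell)\cap[1..|U|]\}$. $\mathrm{maxPairLCP}(\mathcal{P},\mathcal{Q})=\max\{\mathsf{LCP}(P_1,Q_1)+\mathsf{LCP}(P_2,Q_2):(P_1,P_2)\in\mathcal{P},(Q_1,Q_2)\in\mathcal{Q}\}$. With $\$\notin\Sigma$, $\Sigma_\$=\Sigma\cup\{\$\}$: $U',V'\in\Sigma_\$^*$ form a $(U,V)_d$-pair if $|U'|=|U|$, $|V'|=|V|$, and for each $i$: if $i>\mathsf{LCP}_d(U,V)$ or $U[i]=V[i]$ then $U'[i]=U[i]$, $V'[i]=V[i]$; otherwise $U'[i]=V'[i]\in\{U[i],V[i],\$\}$. Sets $N(F)\subseteq\Sigma_\$^*$ form a $k$-complete family if for all $U,V\in\mathcal{F}$,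 $0\le d\le k$, some $(U,V)_d$-pair $(U',V')$ has $U'\in N(U)$, $V'\in N(V)$. $N_d(F)=\{F'\in N(F):|F'|=|F|,\ d_H(F,F')\le d\}$ and $N_{d,d'}(F)=\{F'\in N_d(F): d_H(F,F')-\tfrac12\#_\$(F')\le d'\}$. *)

(* Strings over Sigma are [seq T] for an eqType T;
   Sigma_$ is [option T], with [None] playing the role of $.
   Positions are 1-indexed in the paper; here [nth] is 0-indexed:
   paper position i corresponds to index i-1.
   Half-integers x are represented by the nat h = 2x. *)
From HB Require Import structures.
From mathcomp Require Import all_boot.
Set Implicit Arguments. Unset Strict Implicit. Unset Printing Implicit Defensive.

Section Defs.
Variable T : eqType.

Definition hamming (A : eqType) (s t : seq A) : nat :=
  count (fun xy : A * A => xy.1 != xy.2) (zip s t).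

Definition lcp (A : eqType) (s t : seq A) : nat :=
  \max_(p < (minn (size s) (size t)).+1 | take p s == take p t) p.

Definition lcpd (d : nat) (U V : seq T) : nat :=
  \max_(p < (minn (size U) (size V)).+1 | hamming (take p U) (take p V) <= d) p.

Definition LCF (k : nat) (X Y : seq T) : nat :=
  \max_(len < (minn (size X) (size Y)).+1 |
        [exists i : 'I_(size X).+1, exists j : 'I_(size Y).+1,
           [&& i + len <= size X, j + len <= size Y &
               hamming (take len (drop i X)) (take len (drop j Y)) <= k]]) len.

Definition ndollar (W : seq (option T)) : nat := count (pred1 None) W.

Definition is_cover (d : nat) (S : nat -> Prop) (h : nat -> nat -> nat) : Prop :=
  (forall i, S i -> 0 < i) /\
  (forall i j, 0 < i -> 0 < j -> h i j < d /\ S (i + h i j) /\ S (j + h i j)).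

Definition Pairs (S : nat -> Prop) (U : seq T) (p : seq T * seq T) : Prop :=
  exists i, [/\ S i, 1 <= i <= size U & p = (rev (take i.-1 U), drop i.-1 U)].

Definition is_dpair (d : nat) (U V : seq T) (U' V' : seq (option T)) : Prop :=
  size U' = size U /\ size V' = size V /\
  forall i : nat,
    let u := nth None (map Some U) i in
    let v := nth None (map Some V) i in
    let u' := nth None U' i in
    let v' := nth None V' i in
    if (lcpd d U V <= i) || (u == v) then u' = u /\ v' = v
    else u' = v' /\ u' \in [:: u; v; None].

Definition k_complete (k : nat) (Fam : seq T -> Prop)
    (N : seq T -> seq (option T) -> Prop) : Prop :=
  forall U V, Fam U -> Fam V -> forall d, d <= k ->
    exists U' V', is_dpair d U V U' V' /\ N U U' /\ N V V'.

(* N_{d,d'}(F), with d' = h/2 given by the nat h *)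
Definition Ndd (N : seq T -> seq (option T) -> Prop) (d h : nat) (F : seq T)
    (F' : seq (option T)) : Prop :=
  [/\ N F F', size F' = size F, hamming (map Some F) F' <= d &
      (hamming (map Some F) F').*2 <= h + ndollar F'].

(* Pairs^{(k,k')}_l(S), with k' = h/2 *)
Definition PairsKK (S : nat -> Prop) (N : seq T -> seq (option T) -> Prop)
    (k h : nat) (W : seq T) (p : seq (option T) * seq (option T)) : Prop :=
  exists U1 U2 d1 d2 h1 h2,
    [/\ Pairs S W (U1, U2), d1 + d2 = k, h1 + h2 = h,
        h1 <= d1.*2 /\ h2 <= d2.*2 &
        Ndd N d1 h1 U1 p.1 /\ Ndd N d2 h2 U2 p.2].

Definition pairLCPvals (PP QQ : seq (option T) * seq (option T) -> Prop) (m : nat) : Prop :=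
  exists P Q, [/\ PP P, QQ Q & m = lcp P.1 Q.1 + lcp P.2 Q.2].

End Defs.

Definition is_max (A : nat -> Prop) (m : nat) : Prop :=
  A m /\ forall n, A n -> n <= m.

From mathcomp Require Import all_boot zify.
Set Implicit Arguments. Unset Strict Implicit. Unset Printing Implicit Defensive.

(* Both inequalities are read off a split of X and Y at two anchors s, t, with the
   reversed prefixes and the suffixes compared separately.
   Upper bound: with doubled budgets a change costs 2 and a $ refunds 1. Where the
   original letters differ inside the common prefix of two modified strings, either
   some side changed its letter or both carry the same $, so the two sides pay at
   least 2 there; as the doubled budgets sum to 2k, the window made of the two common
   prefixes around the anchors has at most k mismatches.
   Lower bound: an optimal window has length at least l, so the cover supplies anchors
   at the same offset of the window in X and in Y; splitting its mismatches as d1 left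
   and k - d1 right of the anchors, k-completeness yields modified strings whose common
   prefixes cover the window, with the budgets 2 d_i shared according to the $'s. *)

Lemma bigmax_ord_spec n (P : pred nat) : P 0 ->
  let m := \max_(p < n.+1 | P p) p in
  [/\ P m, m <= n & forall p, p <= n -> P p -> p <= m].
Proof.
move=> P0 /=; split.
- rewrite (bigmax_eq_arg (ord0 : 'I_n.+1)) //.
  by case: arg_maxnP.
- by apply/bigmax_leqP => p _; rewrite -ltnS.
- by move=> p pn Pp; apply: (leq_bigmax_cond (Ordinal (pn : p < n.+1))).
Qed.

Section EqSeq.
Variable A : eqType.
Implicit Types s t : seq A.

Lemma hamming_cons (x y : A) s t : hamming (x :: s) (y :: t) = (x != y) + hamming s t.
Proof. by []. Qed.

Lemma hamming_refl s : hamming s s = 0.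
Proof. by elim: s => // x s; rewrite hamming_cons eqxx. Qed.

Lemma hamming_cat s1 s2 t1 t2 : size s1 = size t1 ->
  hamming (s1 ++ s2) (t1 ++ t2) = hamming s1 t1 + hamming s2 t2.
Proof. by move=> eq_sz; rewrite /hamming zip_cat // count_cat. Qed.

Lemma hamming_rev s t : size s = size t -> hamming (rev s) (rev t) = hamming s t.
Proof. by move=> eq_sz; rewrite /hamming -rev_zip // count_rev. Qed.

Lemma lcp_spec s t : [/\ take (lcp s t) s = take (lcp s t) t,
  lcp s t <= minn (size s) (size t) &
  forall p, p <= minn (size s) (size t) -> take p s = take p t -> p <= lcp s t].
Proof.
have [|/eqP tk le max] := bigmax_ord_spec (minn (size s) (size t))
  (P := fun p => take p s == take p t); first by rewrite !take0.
by split=> // p pst tk'; apply: max => //; apply/eqP.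
Qed.

End EqSeq.

Section Strings.
Variable T : eqType.
Implicit Types U V X Y : seq T.

Lemma ndollar_cons (c : option T) (W : seq (option T)) :
  ndollar (c :: W) = (c == None) + ndollar W.
Proof. by []. Qed.

Lemma ndollar_le_hamming U (U' : seq (option T)) :
  size U' = size U -> ndollar U' <= hamming (map Some U) U'.
Proof.
elim: U U' => [|u U IH] [|c U'] // [/IH le_nd].
have : (c == None) <= (Some u != c) by case: c.
by rewrite ndollar_cons -[map Some _]/(Some u :: map Some U) hamming_cons; lia.
Qed.

Lemma lcpd_spec d U V : [/\ hamming (take (lcpd d U V) U) (take (lcpd d U V) V) <= d,
  lcpd d U V <= minn (size U) (size V) &
  forall p, p <= minn (size U) (size V) ->
    hamming (take p U) (take p V) <= d -> p <= lcpd d U V].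
Proof.
apply: bigmax_ord_spec (minn (size U) (size V))
  (fun p => hamming (take p U) (take p V) <= d) _.
by rewrite !take0.
Qed.

Lemma LCF_spec k X Y :
  (exists i j, [/\ i + LCF k X Y <= size X, j + LCF k X Y <= size Y &
     hamming (take (LCF k X Y) (drop i X)) (take (LCF k X Y) (drop j Y)) <= k]) /\
  (forall len i j, i + len <= size X -> j + len <= size Y ->
     hamming (take len (drop i X)) (take len (drop j Y)) <= k -> len <= LCF k X Y).
Proof.
have [|/existsP[i /existsP[j /and3P[iX jY ham]]] _ max] := bigmax_ord_spec
  (minn (size X) (size Y))
  (P := fun len => [exists i : 'I_(size X).+1, exists j : 'I_(size Y).+1,
           [&& i + len <= size X, j + len <= size Y &
               hamming (take len (drop i X)) (take len (drop j Y)) <= k]]).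
  by apply/existsP; exists ord0; apply/existsP; exists ord0; rewrite /= !take0.
split=> [|len i' j' iX' jY' ham']; first by exists i, j.
apply: max; first lia.
have lt_i : i' < (size X).+1 by lia.
have lt_j : j' < (size Y).+1 by lia.
by apply/existsP; exists (Ordinal lt_i); apply/existsP; exists (Ordinal lt_j); rewrite /= iX' jY'.
Qed.

Lemma hamming_window X Y s t a b : a <= s <= size X -> a <= t <= size Y ->
  hamming (take (a + b) (drop (s - a) X)) (take (a + b) (drop (t - a) Y)) =
  hamming (take a (rev (take s X))) (take a (rev (take t Y))) +
  hamming (take b (drop s X)) (take b (drop t Y)).
Proof.
move=> /andP[a_s sX] /andP[a_t tY].
rewrite !takeD !drop_drop (subnKC a_s) (subnKC a_t) hamming_cat; last first.
  by rewrite !size_take !size_drop; do 2 case: ifP; lia.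
rewrite !take_rev !size_takel // -hamming_rev; last first.
  by rewrite !size_take !size_drop; do 2 case: ifP; lia.
by rewrite !take_drop !(subnKC a_s) !(subnKC a_t).
Qed.

Lemma LCF_ge_split k X Y s t a b : s <= size X -> t <= size Y ->
  a <= minn s t -> b <= minn (size X - s) (size Y - t) ->
  hamming (take a (rev (take s X))) (take a (rev (take t Y))) +
  hamming (take b (drop s X)) (take b (drop t Y)) <= k ->
  a + b <= LCF k X Y.
Proof.
move=> sX tY a_st b_st ham_le; have [_ LCF_max] := LCF_spec k X Y.
apply: (LCF_max _ (s - a) (t - a)); try lia.
by rewrite hamming_window //; apply/andP; split; lia.
Qed.

Lemma cost_letter (u v : T) (c : option T) :
  (u != v).*2 + (c == None) + (c == None) <= ((Some u != c) + (Some v != c)).*2.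
Proof.
have nd_le (x : T) : (c == None) <= (Some x != c) by case: c.
have tri : (u != v) <= (Some u != c) + (Some v != c).
  case: (eqVneq (Some u) c) => [<- | _]; last by case: (u != v).
  by case: (eqVneq (Some v) (Some u)) => [[->]|]; [rewrite eqxx | case: (u != v)].
by have := nd_le u; have := nd_le v; lia.
Qed.

Lemma prefix_cost p U V (U' V' : seq (option T)) :
  size U' = size U -> size V' = size V -> p <= size U -> p <= size V ->
  take p U' = take p V' ->
  (hamming (take p U) (take p V)).*2 + ndollar U' + ndollar V' <=
  (hamming (map Some U) U' + hamming (map Some V) V').*2.
Proof.
elim: p U V U' V' => [|p IH] U V U' V' sU sV.
  rewrite !take0 hamming_refl => _ _ _.
  by have := ndollar_le_hamming sU; have := ndollar_le_hamming sV; lia.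
case: U U' V V' sU sV => [|u U] [|u' U'] // [|v V] [|v' V'] // [sU] [sV] pU pV [<- tk].
have := IH _ _ _ _ sU sV pU pV tk; have := cost_letter u v u'.
by rewrite !ndollar_cons !map_cons !take_cons !hamming_cons; lia.
Qed.

Lemma dpair_letter (u v : T) (u' v' : option T) :
  (if Some u == Some v then u' = Some u /\ v' = Some v
   else u' = v' /\ u' \in [:: Some u; Some v; None]) ->
  [/\ u' = v', (Some u != u') <= (u != v), (Some v != v') <= (u != v) &
      ((Some u != u') + (Some v != v')).*2 <= (u != v).*2 + (u' == None) + (v' == None)].
Proof.
case: (eqVneq (Some u) (Some v)) => [[<-] [-> ->] | uv [<-]]; first by rewrite !eqxx.
have {}uv : u != v := uv.
by rewrite uv !inE => /or3P[] /eqP->; rewrite ?eqxx //=; split=> //; case: (_ != _).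
Qed.

Lemma dpair_prefix_cost m U V (U' V' : seq (option T)) :
  size U' = size U -> size V' = size V -> m <= size U -> m <= size V ->
  (forall i : nat,
    let u := nth None (map Some U) i in
    let v := nth None (map Some V) i in
    let u' := nth None U' i in
    let v' := nth None V' i in
    if (m <= i) || (u == v) then u' = u /\ v' = v
    else u' = v' /\ u' \in [:: u; v; None]) ->
  let H := hamming (take m U) (take m V) in
  [/\ take m U' = take m V', hamming (map Some U) U' <= H,
      hamming (map Some V) V' <= H &
      (hamming (map Some U) U' + hamming (map Some V) V').*2 <=
        H.*2 + ndollar U' + ndollar V'].
Proof.
elim: m U V U' V' => [|m IH] U V U' V' sU sV mU mV agree.
  have eU : U' = map Some U.
    by apply: (@eq_from_nth _ None); rewrite ?size_map // => i _; have [] := agree i.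
  have eV : V' = map Some V.
    by apply: (@eq_from_nth _ None); rewrite ?size_map // => i _; have [] := agree i.
  by rewrite /= eU eV !take0 !hamming_refl; split.
case: U U' V V' sU sV mU mV agree => [|u U] [|u' U'] // [|v V] [|v' V'] //.
move=> [sU] [sV] mU mV agree.
have [tk hamU hamV cost] := IH _ _ _ _ sU sV mU mV (fun i => agree i.+1).
have [<- lu lv lc] := dpair_letter (u := u) (v := v) (u' := u') (v' := v') (agree 0).
rewrite !take_cons tk !map_cons !ndollar_cons !hamming_cons.
by split=> //; lia.
Qed.

End Strings.

Section PairsLCP.
Variables (T : eqType) (S : nat -> Prop) (N : seq T -> seq (option T) -> Prop).
Implicit Types X Y W U V : seq T.

Lemma Pairs_split W p : Pairs S W p -> exists2 s, s < size W & p = (rev (take s W), drop s W).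
Proof. by case=> i [_ /andP[i_gt0 iW] ->]; exists i.-1 => //; lia. Qed.

Lemma Pairs_at W s : S s.+1 -> s < size W -> Pairs S W (rev (take s W), drop s W).
Proof. by move=> Ss sW; exists s.+1; split. Qed.

Lemma Ndd_lcp d d' h h' U V P Q : Ndd N d h U P -> Ndd N d' h' V Q ->
  lcp P Q <= minn (size U) (size V) /\
  (hamming (take (lcp P Q) U) (take (lcp P Q) V)).*2 <= h + h'.
Proof.
case=> _ sP _ costP [_ sQ _ costQ]; have [tk le _] := lcp_spec P Q.
rewrite sP sQ in le; split=> //.
have := prefix_cost sP sQ (leq_trans le (geq_minl _ _)) (leq_trans le (geq_minr _ _)) tk.
lia.
Qed.

Lemma pairLCPval_le_LCF k X Y k1 k2 m : k1 + k2 = k.*2 ->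
  pairLCPvals (PairsKK S N k k1 X) (PairsKK S N k k2 Y) m -> m <= LCF k X Y.
Proof.
move=> sum_k [[P1 P2] [[Q1 Q2] [PX PY ->]]] /=.
case: PX => U1 [U2 [d1 [d2 [h1 [h2 [/Pairs_split[s sX [-> ->]] _ sum_h _ [NP1 NP2]]]]]]].
case: PY => V1 [V2 [e1 [e2 [g1 [g2 [/Pairs_split[t tY [-> ->]] _ sum_g _ [NQ1 NQ2]]]]]]].
have [le1 cost1] := Ndd_lcp NP1 NQ1; have [le2 cost2] := Ndd_lcp NP2 NQ2.
move: le1 le2; rewrite !size_rev !size_takel ?(ltnW sX) ?(ltnW tY) // !size_drop => le1 le2.
by apply: LCF_ge_split (ltnW sX) (ltnW tY) le1 le2 _; lia.
Qed.

Lemma complete_Ndd_pair k (Fam : seq T -> Prop) d U V :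
  k_complete k Fam N -> Fam U -> Fam V -> d <= k ->
  exists (U' V' : seq (option T)) hU hV,
    [/\ hU + hV = d.*2, Ndd N d hU U U', Ndd N d hV V V' & lcpd d U V <= lcp U' V'].
Proof.
move=> complete FU FV dk.
have [U' [V' [[sU [sV agree]] [NU NV]]]] := complete U V FU FV d dk.
have [ham_d m_le _] := lcpd_spec d U V.
have [tk hamU hamV cost] := dpair_prefix_cost sU sV
  (leq_trans m_le (geq_minl _ _)) (leq_trans m_le (geq_minr _ _)) agree.
have ndU := ndollar_le_hamming sU; have ndV := ndollar_le_hamming sV.
(* U' gets the half-integer budget ham(U,U') - #$(U')/2; the cost bound of the
   d-pair shows that the remaining d minus that budget covers V'. *)
pose hU := (hamming (map Some U) U').*2 - ndollar U'.
exists U', V', hU, (d.*2 - hU).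
split; [lia | by split=> //; lia | by split=> //; lia |].
by have [_ _ lcp_max] := lcp_spec U' V'; apply: lcp_max; rewrite // sU sV.
Qed.

Lemma LCF_anchored k l (h : nat -> nat -> nat) X Y : is_cover l S h -> l <= LCF k X Y ->
  exists s t a b, [/\ S s.+1 /\ s < size X, S t.+1 /\ t < size Y, a <= minn s t,
    b <= minn (size X - s) (size Y - t) &
    a + b = LCF k X Y /\
    hamming (take a (rev (take s X))) (take a (rev (take t Y))) +
    hamming (take b (drop s X)) (take b (drop t Y)) <= k].
Proof.
move=> [_ cover] lL; have [[i [j [iX jY ham]]] _] := LCF_spec k X Y.
have [a_l [Si Sj]] := cover i.+1 j.+1 isT isT.
set a := h i.+1 j.+1 in a_l Si Sj.
exists (i + a), (j + a), a, (LCF k X Y - a).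
have a_LCF : a < LCF k X Y by lia.
have ia_X : i + a < size X by lia.
have ja_Y : j + a < size Y by lia.
rewrite !addSn in Si Sj.
split; [by [] | by [] | lia | lia |].
split; first lia.
rewrite -hamming_window; try (apply/andP; split; lia).
by rewrite !addnK subnKC // ltnW.
Qed.

Definition Pairs_components X Y (F : seq T) : Prop :=
  exists p, (Pairs S X p \/ Pairs S Y p) /\ (F = p.1 \/ F = p.2).

Lemma pairLCPval_ge_LCF k l (h : nat -> nat -> nat) X Y : is_cover l S h ->
  k_complete k (Pairs_components X Y) N -> l <= LCF k X Y ->
  exists k1 k2 m, [/\ k1 + k2 = k.*2,
    pairLCPvals (PairsKK S N k k1 X) (PairsKK S N k k2 Y) m & LCF k X Y <= m].
Proof.
move=> cover complete lL.
have [s [t [a [b [[Ss sX] [St tY] a_st b_st [<- ham]]]]]] := LCF_anchored cover lL.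
have PX := Pairs_at Ss sX; have PY := Pairs_at St tY.
have mem p F : Pairs S X p \/ Pairs S Y p -> F = p.1 \/ F = p.2 -> Pairs_components X Y F.
  by move=> Pp Fp; exists p.
set d1 := hamming (take a (rev (take s X))) _ in ham.
have d1_k : d1 <= k by lia.
have [U1' [V1' [hU1 [hV1 [sum1 NU1 NV1 lcp1]]]]] := complete_Ndd_pair (d := d1) complete
  (mem _ _ (or_introl PX) (or_introl erefl)) (mem _ _ (or_intror PY) (or_introl erefl)) d1_k.
have [U2' [V2' [hU2 [hV2 [sum2 NU2 NV2 lcp2]]]]] := complete_Ndd_pair (d := k - d1) complete
  (mem _ _ (or_introl PX) (or_intror erefl)) (mem _ _ (or_intror PY) (or_intror erefl))
  (leq_subr d1 k).
exists (hU1 + hU2), (hV1 + hV2), (lcp U1' V1' + lcp U2' V2'); split.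
- lia.
- exists (U1', U2'), (V1', V2'); split=> //.
  + by exists (rev (take s X)), (drop s X), d1, (k - d1), hU1, hU2; split=> //; lia.
  + by exists (rev (take t Y)), (drop t Y), d1, (k - d1), hV1, hV2; split=> //; lia.
- have [_ _ lcpd1_max] := lcpd_spec d1 (rev (take s X)) (rev (take t Y)).
  have [_ _ lcpd2_max] := lcpd_spec (k - d1) (drop s X) (drop t Y).
  rewrite leq_add //.
  + by apply: leq_trans lcp1; apply: lcpd1_max; rewrite ?size_rev ?size_takel // ltnW.
  + by apply: leq_trans lcp2; apply: lcpd2_max; rewrite ?size_drop //; lia.
Qed.

End PairsLCP.

Theorem corollary11 (T : eqType) (X Y : seq T) (k l : nat)
    (S : nat -> Prop) (h : nat -> nat -> nat)
    (N : seq T -> seq (option T) -> Prop) :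
  1 <= l ->
  is_cover l S h ->
  k_complete k
    (fun F => exists p, (Pairs S X p \/ Pairs S Y p) /\ (F = p.1 \/ F = p.2)) N ->
  l <= LCF k X Y ->
  is_max (fun m => exists k1 k2, k1 + k2 = k.*2 /\
            pairLCPvals (PairsKK S N k k1 X) (PairsKK S N k k2 Y) m)
         (LCF k X Y).
Proof.
(* [1 <= l] is redundant: the cover property already forces it. *)
move=> _ cover complete lL.
have [k1 [k2 [m [sum_k vals LCF_m]]]] := pairLCPval_ge_LCF cover complete lL.
have m_LCF := pairLCPval_le_LCF sum_k vals.
split=> [|n [k1' [k2' [sum_k' vals']]]]; last exact: pairLCPval_le_LCF sum_k' vals'.
have -> : LCF k X Y = m by apply/eqP; rewrite eqn_leq LCF_m m_LCF.
by exists k1, k2.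
Qed.
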